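(* Let $h_{SR_k}, h_{R_kD}, h_{SP}, h_{R_kP}, h_{R_kR_k} \in \mathbb{C}$, $\sigma_D > 0$, $\zeta \ge 0$, and set $\hat{\zeta} = |h_{R_kR_k}|^2 \zeta$, assumed $>0$. Let $\bar{\mathcal{I}}_P > 0$, $P_S^{\max} > 0$, $P_{R_k}^{\max} > 0$. Consider the optimization problem (Problem 2) $$\max_{P_S, P_{R_k}} \ \bar{\mathcal{C}}_k(P_S, P_{R_k}) = \frac{\frac{P_{R_k}|h_{R_kD}|^2}{\sigma_D^2}\cdot\frac{P_S |h_{SR_k}|^2}{\hat{\zeta} P_{R_k}}}{1 + \frac{P_{R_k}|h_{R_kD}|^2}{\sigma_D^2} + \frac{P_S |h_{SR_k}|^2}{\hat{\zeta} P_{R_k}}}$$ subject to $$|h_{SP}|^2 P_S + |h_{R_kP}|^2 P_{R_k}(1+\zeta) \le \bar{\mathcal{I}}_P,\quad 0 \le P_S \le P_S^{\max},\quad 0 \le P_{R_k} \le P_{R_k}^{\max}.$$ Then Problem 2 is a nonconvex optimization problem in the joint variable $(P_S, P_{R_k})$.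
   Context: A maximization problem is called a convex optimization problem if its objective is a concave function over a convex feasible set; it is nonconvex otherwise. The objective $\bar{\mathcal{C}}_k$ is defined for $P_{R_k} > 0$. The first constraint is the interference at the primary receiver in the non-coherent scenario. *)

From Stdlib Require Import Reals.
From Coquelicot Require Import Coquelicot.
Open Scope R_scope.

Definition convex_set (S : R * R -> Prop) : Prop :=
  forall p q : R * R, S p -> S q -> forall t : R, 0 <= t <= 1 ->
    S (t * fst p + (1 - t) * fst q, t * snd p + (1 - t) * snd q).

Definition concave_on (S : R * R -> Prop) (f : R * R -> R) : Prop :=
  forall p q : R * R, S p -> S q -> forall t : R, 0 <= t <= 1 ->
    t * f p + (1 - t) * f q
      <= f (t * fst p + (1 - t) * fst q, t * snd p + (1 - t) * snd q).

Definition convex_max_problem (S : R * R -> Prop) (f : R * R -> R) : Prop :=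
  convex_set S /\ concave_on S f.

Definition Cbar (hSR hRD : C) (sigmaD zetahat : R) (p : R * R) : R :=
  let PS := fst p in let PR := snd p in
  let g1 := PR * (Cmod hRD)^2 / sigmaD^2 in
  let g2 := PS * (Cmod hSR)^2 / (zetahat * PR) in
  g1 * g2 / (1 + g1 + g2).

(* Feasible set of Problem 2, intersected with the domain P_R > 0 of the
   objective. *)
Definition feasible (hSP hRP : C) (zeta IP PSmax PRmax : R) (p : R * R) : Prop :=
  let PS := fst p in let PR := snd p in
  (Cmod hSP)^2 * PS + (Cmod hRP)^2 * PR * (1 + zeta) <= IP /\
  0 <= PS <= PSmax /\ 0 <= PR <= PRmax /\ 0 < PR.

(* With a = |h_RD|^2 / sigma_D^2 and b = |h_SR|^2 / zetahat the two gains are a P_R and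
   b P_S / P_R, so their product a b P_S is linear and Cbar = a b P_S / D with
   D = 1 + a P_R + b P_S / P_R.  Along the segment from q = (0, 3R/2) to p = (e, R/2) the
   objective vanishes at q, so concavity would force Cbar (mid) >= Cbar p / 2, that is
   D (mid) <= D p; but D (mid) - D p = (a R^2 - 3 b e) / (2 R) is positive once e is
   small.  Such p and q are feasible as soon as R is small as well. *)
From Stdlib Require Import Reals Lra.
From Coquelicot Require Import Coquelicot.
Open Scope R_scope.

Lemma not_concave_on_of_midpoint (S : R * R -> Prop) (f : R * R -> R) (p q : R * R) :
  S p -> S q ->
  f ((fst p + fst q) / 2, (snd p + snd q) / 2) < (f p + f q) / 2 ->
  ~ concave_on S f.
Proof.
  intros hp hq hlt hconc.
  specialize (hconc p q hp hq (1 / 2) ltac:(lra)).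
  replace (1 / 2 * fst p + (1 - 1 / 2) * fst q) with ((fst p + fst q) / 2)
    in hconc by field.
  replace (1 / 2 * snd p + (1 - 1 / 2) * snd q) with ((snd p + snd q) / 2)
    in hconc by field.
  lra.
Qed.

Definition Cbar_gains (a b : R) (p : R * R) : R :=
  a * b * fst p / (1 + a * snd p + b * fst p / snd p).

Lemma Cbar_eq_Cbar_gains (hSR hRD : C) (sigmaD zetahat : R) (p : R * R) :
  0 < sigmaD -> 0 < zetahat -> 0 < snd p ->
  Cbar hSR hRD sigmaD zetahat p
  = Cbar_gains (Cmod hRD ^ 2 / sigmaD ^ 2) (Cmod hSR ^ 2 / zetahat) p.
Proof.
  intros hsigma hzhat hPR; unfold Cbar, Cbar_gains; cbv zeta.
  f_equal; field; lra.
Qed.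

Lemma Cbar_gains_not_midpoint_concave (a b e R : R) :
  0 < a -> 0 < b -> 0 < e -> 0 < R -> 3 * b * e < a * R ^ 2 ->
  Cbar_gains a b (e / 2, R)
  < (Cbar_gains a b (e, R / 2) + Cbar_gains a b (0, 3 * R / 2)) / 2.
Proof.
  intros ha hb he hR hsmall; unfold Cbar_gains; cbn [fst snd].
  set (D1 := 1 + a * (R / 2) + b * e / (R / 2)).
  set (D2 := 1 + a * R + b * (e / 2) / R).
  assert (hD1 : 0 < D1).
  { unfold D1; assert (0 < b * e / (R / 2)) by (apply Rdiv_lt_0_compat; nra); nra. }
  assert (hD12 : D1 < D2).
  { assert (hgap : D2 - D1 = (a * R ^ 2 - 3 * b * e) / (2 * R))
      by (unfold D1, D2; field; lra).
    assert (0 < (a * R ^ 2 - 3 * b * e) / (2 * R)) by (apply Rdiv_lt_0_compat; lra).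
    lra. }
  replace (a * b * (e / 2) / D2) with (a * b * e / 2 * / D2) by (field; lra).
  replace ((a * b * e / D1 + a * b * 0 / (1 + a * (3 * R / 2) + b * 0 / (3 * R / 2))) / 2)
    with (a * b * e / 2 * / D1) by (field; repeat split; [lra | nra | lra]).
  apply Rmult_lt_compat_l.
  - assert (0 < a * b * e) by (repeat apply Rmult_lt_0_compat; lra); lra.
  - apply Rinv_lt_contravar; [apply Rmult_lt_0_compat |]; lra.
Qed.

Lemma feasible_near_origin (hSP hRP : C) (zeta IP PSmax PRmax : R) :
  0 <= zeta -> 0 < IP -> 0 < PSmax -> 0 < PRmax ->
  exists delta, 0 < delta /\
    forall PS PR, 0 <= PS <= delta -> 0 < PR <= delta ->
      feasible hSP hRP zeta IP PSmax PRmax (PS, PR).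
Proof.
  intros hzeta hIP hPS hPR.
  set (s := Cmod hSP ^ 2); set (r := Cmod hRP ^ 2 * (1 + zeta)).
  assert (hs : 0 <= s) by apply pow2_ge_0.
  assert (hr : 0 <= r) by (apply Rmult_le_pos; [apply pow2_ge_0 | lra]).
  set (delta := Rmin (Rmin PSmax PRmax) (IP / (s + r + 1))).
  assert (hIPd : 0 < IP / (s + r + 1)) by (apply Rdiv_lt_0_compat; lra).
  assert (hdelta : (s + r) * delta <= IP).
  { apply Rle_trans with ((s + r) * (IP / (s + r + 1))).
    - apply Rmult_le_compat_l; [lra | apply Rmin_r].
    - replace ((s + r) * (IP / (s + r + 1))) with (IP - IP / (s + r + 1)) by (field; lra).
      lra. }
  assert (hdPS : delta <= PSmax) by (eapply Rle_trans; apply Rmin_l).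
  assert (hdPR : delta <= PRmax)
    by (eapply Rle_trans; [apply Rmin_l | apply Rmin_r]).
  exists delta; split; [apply Rmin_glb_lt; [apply Rmin_glb_lt |]; lra |].
  intros PS PR hPSd hPRd.
  unfold feasible; cbn [fst snd].
  replace (Cmod hSP ^ 2 * PS + Cmod hRP ^ 2 * PR * (1 + zeta)) with (s * PS + r * PR)
    by (unfold s, r; ring).
  repeat split; try lra.
  assert (s * PS <= s * delta) by (apply Rmult_le_compat_l; lra).
  assert (r * PR <= r * delta) by (apply Rmult_le_compat_l; lra).
  lra.
Qed.

Theorem lemma1 (hSR hRD hSP hRP hRR : C) (sigmaD zeta IP PSmax PRmax : R)
  (hsigma : 0 < sigmaD) (hzeta : 0 <= zeta)
  (hzhat : 0 < (Cmod hRR)^2 * zeta)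
  (hIP : 0 < IP) (hPS : 0 < PSmax) (hPR : 0 < PRmax)
  (hSR_nz : hSR <> 0%C) (hRD_nz : hRD <> 0%C) :
  ~ convex_max_problem (feasible hSP hRP zeta IP PSmax PRmax)
      (Cbar hSR hRD sigmaD ((Cmod hRR)^2 * zeta)).
Proof.
  intros [_ hconc].
  set (a := Cmod hRD ^ 2 / sigmaD ^ 2).
  set (b := Cmod hSR ^ 2 / ((Cmod hRR)^2 * zeta)).
  assert (ha : 0 < a) by (apply Rdiv_lt_0_compat; apply pow_lt; [apply Cmod_gt_0 |]; auto).
  assert (hb : 0 < b) by (apply Rdiv_lt_0_compat; [apply pow_lt, Cmod_gt_0 |]; auto).
  destruct (feasible_near_origin hSP hRP _ _ _ _ hzeta hIP hPS hPR) as [delta [hdelta hfeas]].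
  set (R := 2 * delta / 3).
  assert (hR : 0 < R) by (unfold R; lra).
  assert (haR : 0 < a * R ^ 2) by (apply Rmult_lt_0_compat; [| apply pow_lt]; lra).
  set (e := Rmin delta (a * R ^ 2 / (6 * b))).
  assert (he : 0 < e) by (apply Rmin_glb_lt; [| apply Rdiv_lt_0_compat]; lra).
  assert (hsmall : 3 * b * e < a * R ^ 2).
  { assert (b * e <= a * R ^ 2 / 6); [| lra].
    apply Rle_trans with (b * (a * R ^ 2 / (6 * b))).
    - apply Rmult_le_compat_l; [lra | apply Rmin_r].
    - right; field; lra. }
  refine (not_concave_on_of_midpoint _ _ (e, R / 2) (0, 3 * R / 2) _ _ _ hconc);
    cbn [fst snd].
  - apply hfeas; repeat split; try lra; [apply Rmin_l | unfold R; lra].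
  - apply hfeas; unfold R; lra.
  - replace ((e + 0) / 2, (R / 2 + 3 * R / 2) / 2) with (e / 2, R) by (f_equal; field).
    rewrite !Cbar_eq_Cbar_gains; cbn [fst snd]; try lra.
    now apply Cbar_gains_not_midpoint_concave.
Qed.
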